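(* Let $\mathbf{A}\in\mathbb{R}^{m\times n}$, $b\in\mathcal{R}(\mathbf{A})$, and let $f:\mathbb{R}^n\to\mathbb{R}$ be finite everywhere and strongly convex. Let $\hat x$ be the unique solution of $\min_{x\in\mathbb{R}^n} f(x)$ subject to $\mathbf{A}x=b$, let $\Psi(y)=f^*(\mathbf{A}^\top y)-b^\top y$ for $y\in\mathbb{R}^m$, and let $\hat\Psi=\min_{y\in\mathbb{R}^m}\Psi(y)$. Let $(y^k)_k\subset\mathbb{R}^m$ be any sequence and define $d^k=\mathbf{A}^\top y^k$ and $x^k=\nabla f^*(d^k)$. Then for every $k$, $$D_f^{d^k}(x^k,\hat x)=\Psi(y^k)-\hat\Psi.$$
   Context: $f^*(x^* )=\sup_{y\in\mathbb{R}^n}\langle x^*,y\rangle-f(y)$ is the Fenchel conjugate; for strongly convex finite $f$ it is finite and differentiable, and $\nabla f^*(d)\in\mathbb{R}^n$ satisfies $d\in\partial f(\nabla f^*(d))$. For $x^*\in\partial f(x)$, the Bregman distance is $D_f^{x^*}(x,y)=f(y)-f(x)-\langle x^*,y-x\rangle$. The minimum $\hat\Psi$ of the dual function $\Psi$ is attained and strong duality $\hat\Psi=-f(\hat x)$ holds. *)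

From HB Require Import structures.
From mathcomp Require Import all_boot all_order all_algebra.
From mathcomp Require Import all_classical all_reals all_analysis.
Set Implicit Arguments. Unset Strict Implicit. Unset Printing Implicit Defensive.
Import Order.TTheory GRing.Theory Num.Theory.
Import numFieldNormedType.Exports.
Local Open Scope classical_set_scope.
Local Open Scope ring_scope.

Definition inner (R : realType) (n : nat) (u v : 'cV[R]_n) : R :=
  \sum_(i < n) u i 0 * v i 0.

Definition strongly_convex (R : realType) (n : nat) (f : 'cV[R]_n -> R) : Prop :=
  exists mu : R, 0 < mu /\
    forall (x y : 'cV[R]_n) (t : R), 0 <= t <= 1 ->
      f (t *: x + (1 - t) *: y) <=
        t * f x + (1 - t) * f y - mu / 2 * t * (1 - t) * inner (x - y) (x - y).

Definition fconj (R : realType) (n : nat) (f : 'cV[R]_n -> R) (xs : 'cV[R]_n) : R :=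
  sup [set inner xs y - f y | y in [set: 'cV[R]_n]].

Definition in_subdiff (R : realType) (n : nat) (f : 'cV[R]_n -> R) (x xs : 'cV[R]_n) : Prop :=
  forall y, f x + inner xs (y - x) <= f y.

Definition is_gradient (R : realType) (n : nat) (F : 'cV[R]_n -> R) (d g : 'cV[R]_n) : Prop :=
  differentiable F d /\ forall h : 'cV[R]_n, ('d F d) h = inner g h.

Definition bregman (R : realType) (n : nat) (f : 'cV[R]_n -> R) (xs x y : 'cV[R]_n) : R :=
  f y - f x - inner xs (y - x).

Definition Psi (R : realType) (m n : nat) (f : 'cV[R]_n -> R) (A : 'M[R]_(m, n))
  (b : 'cV[R]_m) (y : 'cV[R]_m) : R :=
  fconj f (A^T *m y) - inner b y.

Definition Psihat (R : realType) (m n : nat) (f : 'cV[R]_n -> R) (A : 'M[R]_(m, n))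
  (b : 'cV[R]_m) : R :=
  inf [set Psi f A b y | y in [set: 'cV[R]_m]].

(* Every finite convex function on R^n has a subgradient at every point: extend
   a dominated linear form one coordinate at a time, as in Hahn-Banach.  A
   strongly convex f therefore grows quadratically, so f^* is finite and convex.
   If f^* has gradient x at d, then x is a subgradient of f^* at d; testing this
   at a subgradient s of f at x, where f^*(s) = <s,x> - f(x), gives the
   Fenchel-Young equality f^*(d) = <d,x> - f(x).  A subgradient at xhat of the
   convex function u |-> inf {f(u + w) | A w = 0} is orthogonal to ker A, hence
   equals A^T y for some y, and then Psi(y) = -f(xhat) = min Psi.  The theorem
   is the resulting algebra with d = A^T y^k and b = A xhat. *)

From mathcomp Require Import all_boot all_order all_algebra.
From mathcomp Require Import all_classical all_reals all_analysis.
From mathcomp Require Import ring lra.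
Set Implicit Arguments. Unset Strict Implicit. Unset Printing Implicit Defensive.
Import Order.TTheory GRing.Theory Num.Theory.
Import numFieldNormedType.Exports.
Local Open Scope classical_set_scope.
Local Open Scope ring_scope.

Section Inner.
Variables (R : realType) (n : nat).
Implicit Types (a : R) (u v w : 'cV[R]_n).

Lemma innerC u v : inner u v = inner v u.
Proof. by apply: eq_bigr => i _; rewrite mulrC. Qed.

Lemma innerDl u v w : inner (u + v) w = inner u w + inner v w.
Proof. by rewrite /inner -big_split; apply: eq_bigr => i _; rewrite mxE mulrDl. Qed.

Lemma innerZl a u w : inner (a *: u) w = a * inner u w.
Proof. by rewrite /inner mulr_sumr; apply: eq_bigr => i _; rewrite mxE mulrA. Qed.

Lemma innerNl u w : inner (- u) w = - inner u w.
Proof. by rewrite -scaleN1r innerZl mulN1r. Qed.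

Lemma innerBl u v w : inner (u - v) w = inner u w - inner v w.
Proof. by rewrite innerDl innerNl. Qed.

Lemma innerDr u v w : inner w (u + v) = inner w u + inner w v.
Proof. by rewrite !(innerC w) innerDl. Qed.

Lemma innerZr a u w : inner w (a *: u) = a * inner w u.
Proof. by rewrite !(innerC w) innerZl. Qed.

Lemma innerNr u w : inner w (- u) = - inner w u.
Proof. by rewrite !(innerC w) innerNl. Qed.

Lemma innerBr u v w : inner w (u - v) = inner w u - inner w v.
Proof. by rewrite innerDr innerNr. Qed.

Lemma inner0l w : inner 0 w = 0.
Proof. by rewrite /inner big1 // => i _; rewrite mxE mul0r. Qed.

Lemma inner_ge0 u : 0 <= inner u u.
Proof. by apply: sumr_ge0 => i _; rewrite -expr2 sqr_ge0. Qed.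

Lemma inner_deltal (i0 : 'I_n) w : inner (delta_mx i0 0) w = w i0 0.
Proof.
rewrite /inner (bigD1 i0) //= big1 ?addr0; first by rewrite mxE !eqxx mul1r.
by move=> i /negPf Hi; rewrite mxE Hi mul0r.
Qed.

Lemma inner_trmx m (A : 'M[R]_(m, n)) (y : 'cV[R]_m) w :
  inner (A^T *m y) w = inner y (A *m w).
Proof.
rewrite /inner; under eq_bigr do rewrite !mxE big_distrl /=.
rewrite exchange_big /=; apply: eq_bigr => j _.
rewrite !mxE big_distrr /=; apply: eq_bigr => i _.
by rewrite !mxE mulrCA mulrA.
Qed.

End Inner.

Definition convex_fun (R : realType) (n : nat) (phi : 'cV[R]_n -> R) :=
  forall (a b : 'cV[R]_n) (t : R), 0 <= t <= 1 ->
    phi (t *: a + (1 - t) *: b) <= t * phi a + (1 - t) * phi b.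

Lemma strongly_convex_convex (R : realType) n (f : 'cV[R]_n -> R) :
  strongly_convex f -> convex_fun f.
Proof.
move=> [mu [mu0 Hf]] a b t /andP[t0 t1]; apply: le_trans (Hf a b t _) _.
  by rewrite t0 t1.
suff : 0 <= mu / 2 * t * (1 - t) * inner (a - b) (a - b) by lra.
rewrite mulr_ge0 ?inner_ge0 // mulr_ge0 ?subr_ge0 // mulr_ge0 //.
by rewrite divr_ge0 // ltW.
Qed.

Lemma exists_between (R : realType) (L U : set R) :
  L !=set0 -> U !=set0 -> (forall a b, L a -> U b -> a <= b) ->
  exists c, ubound L c /\ lbound U c.
Proof.
move=> L0 [b Ub] LU.
have supL : has_sup L by split => //; exists b => a La; exact: LU.
exists (sup L); split; first exact: sup_upper_bound.
by move=> b' Ub'; apply: ge_sup => // a La; exact: LU.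
Qed.

Definition vanish_from (R : realType) (n k : nat) (w : 'cV[R]_n) :=
  forall i : 'I_n, (k <= i)%N -> w i 0 = 0.

Section Subgradient.
Variables (R : realType) (n : nat) (q : 'cV[R]_n -> R).
Hypothesis q_convex : convex_fun q.

Lemma chord_slope_le k (s e w w' : 'cV[R]_n) (u t : R) :
  (forall z, vanish_from k z -> inner s z <= q z) ->
  vanish_from k w -> vanish_from k w' -> 0 < u -> 0 < t ->
  (inner s w - q (w - u *: e)) / u <= (q (w' + t *: e) - inner s w') / t.
Proof.
move=> dom Ww Ww' u0 t0.
pose l := t / (t + u).
have lu : (1 - l) * t = l * u by rewrite /l; field; lra.
have l01 : 0 <= l <= 1.
  by apply/andP; split; rewrite /l ?divr_ge0 ?ler_pdivrMr ?mul1r //; lra.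
have Ez : l *: (w - u *: e) + (1 - l) *: (w' + t *: e) = l *: w + (1 - l) *: w'.
  by rewrite !scalerDr !scalerN !scalerA lu addrACA [X in _ + X]addrC subrr addr0.
have Wz : vanish_from k (l *: w + (1 - l) *: w').
  by move=> i ki; rewrite !mxE Ww // Ww' // !mulr0 addr0.
have := q_convex (w - u *: e) (w' + t *: e) l01.
rewrite Ez => /(le_trans (dom _ Wz)); rewrite innerDr !innerZr => H.
rewrite ler_pdivrMr // mulrAC ler_pdivlMr //.
have scale a b : (l * a + (1 - l) * b) * (t + u) = t * a + u * b.
  by rewrite /l; field; lra.
have := ler_wpM2r (ltW (addr_gt0 t0 u0)) H; rewrite !scale; lra.
Qed.

Lemma vanish_fromS_sub k (kn : (k < n)%N) (h : 'cV[R]_n) :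
  vanish_from k.+1 h ->
  vanish_from k (h - h (Ordinal kn) 0 *: delta_mx (Ordinal kn) 0).
Proof.
move=> Wh i ki; rewrite !mxE.
have [->|ne] := eqVneq i (Ordinal kn); first by rewrite !eqxx mulr1 subrr.
rewrite /= mulr0 subr0; apply: Wh; rewrite ltn_neqAle ki andbT.
by move: ne; apply: contra => /eqP E; apply/eqP/val_inj; rewrite /= E.
Qed.

Lemma dominated_extension_step k (kn : (k < n)%N) (s : 'cV[R]_n) :
  (forall w, vanish_from k w -> inner s w <= q w) ->
  exists s', forall w, vanish_from k.+1 w -> inner s' w <= q w.
Proof.
move=> dom; set i0 := Ordinal kn; set e : 'cV[R]_n := delta_mx i0 0.
have W0 : vanish_from k (0 : 'cV[R]_n) by move=> i _; rewrite mxE.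
pose lower r := exists w (u : R),
  [/\ vanish_from k w, 0 < u & r = (inner s w - q (w - u *: e)) / u].
pose upper r := exists w (t : R),
  [/\ vanish_from k w, 0 < t & r = (q (w + t *: e) - inner s w) / t].
have [c [cL cU]] : exists c, ubound lower c /\ lbound upper c.
  apply: exists_between; [by eexists; exists 0, 1 | by eexists; exists 0, 1 |].
  move=> _ _ [w [u [Ww u0 ->]]] [w2 [t [Ww2 t0 ->]]].
  exact: (chord_slope_le e dom Ww Ww2 u0 t0).
exists (s + (c - inner s e) *: e) => h Wh.
set t := h i0 0; set w := h - t *: e.
have Ww : vanish_from k w := vanish_fromS_sub kn Wh.
have -> : h = w + t *: e by rewrite subrK.
clearbody w t.
have iew : inner e w = 0 by rewrite inner_deltal; apply: Ww.
have iee : inner e e = 1 by rewrite inner_deltal mxE !eqxx.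
have -> : inner (s + (c - inner s e) *: e) (w + t *: e) = inner s w + t * c.
  by rewrite innerDl !innerDr !innerZl !innerZr iew iee; ring.
case: (ltgtP t 0) => [tn|tp|->].
- have : (inner s w - q (w - (- t) *: e)) / (- t) <= c.
    by apply: cL; exists w, (- t); split; rewrite ?oppr_gt0.
  by rewrite scaleNr opprK ler_pdivrMr ?oppr_gt0 //; lra.
- have : c <= (q (w + t *: e) - inner s w) / t by apply: cU; exists w, t.
  by rewrite ler_pdivlMr //; lra.
- by rewrite mul0r addr0 scale0r addr0; exact: dom.
Qed.

Lemma dominated_linear_minorant : q 0 = 0 ->
  forall k, (k <= n)%N -> exists s, forall w, vanish_from k w -> inner s w <= q w.
Proof.
move=> q0; elim=> [_|k IH kn].
  exists 0 => w Ww; have -> : w = 0.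
    by apply/matrixP => i j; rewrite mxE (ord1 j) Ww.
  by rewrite inner0l q0.
have [s dom] := IH (ltnW kn); exact: (dominated_extension_step kn dom).
Qed.

End Subgradient.

Lemma convex_subgradient (R : realType) n (phi : 'cV[R]_n -> R) (x : 'cV[R]_n) :
  convex_fun phi -> exists s, in_subdiff phi x s.
Proof.
move=> phi_convex; pose q h := phi (x + h) - phi x.
have q_convex : convex_fun q.
  move=> a b t t01; have := phi_convex (x + a) (x + b) t t01.
  have -> : t *: (x + a) + (1 - t) *: (x + b) = x + (t *: a + (1 - t) *: b).
    by rewrite !scalerDr addrACA -scalerDl [t + _]addrC subrK scale1r.
  rewrite /q; lra.
have q0 : q 0 = 0 by rewrite /q addr0 subrr.
have [s dom] := dominated_linear_minorant q_convex q0 (leqnn n).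
exists s => y; have full : vanish_from n (y - x) by move=> i; rewrite leqNgt ltn_ord.
by have := dom _ full; rewrite /q [x + _]addrC subrK; lra.
Qed.

Lemma young_quadratic (R : realType) n (mu : R) (v y : 'cV[R]_n) : 0 < mu ->
  inner v y - mu / 4 * inner y y <= inner v v / mu.
Proof.
move=> mu0; rewrite /inner mulr_sumr mulr_suml -sumrB; apply: ler_sum => i _.
set a := v i 0; set c := y i 0.
have -> : a * a / mu = a * c - mu / 4 * (c * c) + mu * (a / mu - c / 2) ^+ 2.
  by field; lra.
by rewrite lerDl mulr_ge0 ?sqr_ge0 // ltW.
Qed.

Lemma fconj_le (R : realType) n (f : 'cV[R]_n -> R) (d : 'cV[R]_n) (c : R) :
  (forall y, inner d y - f y <= c) -> fconj f d <= c.
Proof.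
move=> ub; apply: ge_sup; first by exists (inner d 0 - f 0), 0.
by move=> _ [y _ <-].
Qed.

Lemma differential_approx (R : realType) n (F : 'cV[R]_n -> R) (d : 'cV[R]_n) :
  differentiable F d -> forall eps : R, 0 < eps ->
  exists2 r : R, 0 < r & forall h, `|h| < r ->
    `|F (h + d) - F d - 'd F d h| <= eps * `|h|.
Proof.
move=> Fd eps eps0; move/eqaddoP: (diff_locally Fd) => small.
have [r Hr] := nbhs_ex (small eps eps0).
exists r%:num => // h hr; have := Hr h.
rewrite -ball_normE /ball_ /= add0r normrN => /(_ hr).
by rewrite /shift /= opprD addrA.
Qed.

Lemma convex_gradient_subdiff (R : realType) n (F : 'cV[R]_n -> R) (d g : 'cV[R]_n) :
  convex_fun F -> is_gradient F d g -> in_subdiff F d g.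
Proof.
move=> F_convex [Fd dF] e; set h := e - d; set N := `|h|.
apply/ler_addgt0Pr => eps eps0.
have N0 : 0 <= N := normr_ge0 h.
pose eps' := eps / (N + 1).
have eps'0 : 0 < eps' by rewrite divr_gt0 //; lra.
have eps'N : eps' * N <= eps.
  by rewrite /eps' mulrAC ler_pdivrMr ?ler_wpM2l; lra.
have [r r0 approx] := differential_approx Fd eps'0.
pose t := r / (r + N).
have t0 : 0 < t by rewrite divr_gt0 //; lra.
have t1 : t <= 1 by rewrite ler_pdivrMr ?mul1r; lra.
have th : `|t *: h| = t * N by rewrite normrZ gtr0_norm.
have tN : t * N < r by rewrite /t mulrAC ltr_pdivrMr; nra.
have := approx (t *: h); rewrite th dF innerZr ler_norml => /(_ tN) /andP[lo _].
have : F (t *: h + d) <= t * F e + (1 - t) * F d.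
  have -> : t *: h + d = t *: e + (1 - t) *: d.
    by apply/matrixP => i j; rewrite !mxE; ring.
  by apply: F_convex; rewrite ltW.
move=> conv; have : t * (inner g h - eps' * N) <= t * (F e - F d) by lra.
by rewrite ler_pM2l //; lra.
Qed.

Section Conjugate.
Variables (R : realType) (n : nat) (f : 'cV[R]_n -> R).
Hypothesis f_sc : strongly_convex f.

Lemma strongly_convex_quadratic_minorant :
  exists mu s0, 0 < mu /\ forall y, f 0 + inner s0 y + mu / 4 * inner y y <= f y.
Proof.
(* Strong convexity at the midpoint of y and 0, against a subgradient at 0. *)
have [mu [mu0 Hf]] := f_sc.
have [s0 Hs0] := convex_subgradient 0 (strongly_convex_convex f_sc).
exists mu, s0; split => // y.
have half : 0 <= (1 / 2 : R) <= 1 by apply/andP; split; lra.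
have := Hf y 0 (1 / 2) half; have := Hs0 ((1 / 2) *: y + (1 - 1 / 2) *: 0).
by rewrite scaler0 addr0 !subr0 innerZr; lra.
Qed.

Lemma strongly_convex_bounded_below : exists c, forall y, c <= f y.
Proof.
have [mu [s0 [mu0 Hf]]] := strongly_convex_quadratic_minorant.
exists (f 0 - inner s0 s0 / mu) => y.
have := young_quadratic (- s0) y mu0; have := Hf y.
by rewrite !innerNl innerNr opprK; lra.
Qed.

Lemma fconj_has_sup d : has_sup [set inner d y - f y | y in [set: 'cV[R]_n]].
Proof.
have [mu [s0 [mu0 Hf]]] := strongly_convex_quadratic_minorant.
split; first by exists (inner d 0 - f 0), 0.
exists (- f 0 + inner (d - s0) (d - s0) / mu) => _ [y _ <-].
by have := young_quadratic (d - s0) y mu0; have := Hf y; rewrite innerBl; lra.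
Qed.

Lemma le_fconj d y : inner d y - f y <= fconj f d.
Proof. by apply: (sup_upper_bound (fconj_has_sup d)); exists y. Qed.

Lemma fconj_subdiff x s : in_subdiff f x s -> fconj f s = inner s x - f x.
Proof.
move=> Hs; apply/le_anti; rewrite le_fconj andbT.
by apply: fconj_le => y; have := Hs y; rewrite innerBr; lra.
Qed.

Lemma fconj_convex : convex_fun (fconj f).
Proof.
move=> a c t /andP[t0 t1]; apply: fconj_le => y.
have Ha := ler_wpM2l t0 (le_fconj a y).
have Hc : (1 - t) * (inner c y - f y) <= (1 - t) * fconj f c.
  by rewrite ler_wpM2l ?le_fconj ?subr_ge0.
by rewrite innerDl !innerZl; lra.
Qed.

Lemma fconj_gradient d x : is_gradient (fconj f) d x -> fconj f d = inner d x - f x.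
Proof.
move=> grad; apply/le_anti; rewrite le_fconj andbT.
have [s fs] := convex_subgradient x (strongly_convex_convex f_sc).
have := convex_gradient_subdiff fconj_convex grad s.
by rewrite (fconj_subdiff fs) innerBr [inner x s]innerC [inner x d]innerC; lra.
Qed.

End Conjugate.

Lemma orthogonal_ker_in_range (R : realType) m n (A : 'M[R]_(m, n)) (s : 'cV[R]_n) :
  (forall w, A *m w = 0 -> inner s w = 0) -> exists y, A^T *m y = s.
Proof.
move=> s_ker; have s_row : (s^T <= A)%MS.
  rewrite submxE; apply/eqP/matrixP => i j; rewrite !mxE.
  have := s_ker (col j (cokermx A)).
  rewrite colE mulmxA -colE mulmx_coker mul0mx => /(_ erefl) E.
  by rewrite -[X in _ = X]E; apply: eq_bigr => k _; rewrite !mxE (ord1 i).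
by exists (s^T *m pinvmx A)^T; rewrite -trmx_mul mulmxKpV // trmxK.
Qed.

Section Duality.
Variables (R : realType) (m n : nat) (A : 'M[R]_(m, n)) (f : 'cV[R]_n -> R).
Hypothesis f_sc : strongly_convex f.

Definition ker_inf (u : 'cV[R]_n) :=
  inf [set f (u + w) | w in [set w : 'cV[R]_n | A *m w = 0]].

Lemma has_inf_ker u : has_inf [set f (u + w) | w in [set w : 'cV[R]_n | A *m w = 0]].
Proof.
split; first by exists (f (u + 0)), 0; rewrite //= mulmx0.
have [c fc] := strongly_convex_bounded_below f_sc.
by exists c => _ [w _ <-].
Qed.

Lemma ker_inf_le u w : A *m w = 0 -> ker_inf u <= f (u + w).
Proof. by move=> Aw; apply: (ge_inf (has_inf_ker u).2); exists w. Qed.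

Lemma ker_inf_convex : convex_fun ker_inf.
Proof.
move=> a c t /andP[t0 t1]; apply/ler_addgt0Pr => eps eps0.
have [_ [w1 Aw1 <-] fw1] := inf_adherent eps0 (has_inf_ker a).
have [_ [w2 Aw2 <-] fw2] := inf_adherent eps0 (has_inf_ker c).
have Aw : A *m (t *: w1 + (1 - t) *: w2) = 0.
  by rewrite mulmxDr -!scalemxAr Aw1 Aw2 !scaler0 addr0.
have := ker_inf_le (t *: a + (1 - t) *: c) Aw.
have -> : t *: a + (1 - t) *: c + (t *: w1 + (1 - t) *: w2) =
          t *: (a + w1) + (1 - t) *: (c + w2) by rewrite !scalerDr addrACA.
have t01 : 0 <= t <= 1 by rewrite t0 t1.
have := strongly_convex_convex f_sc (a + w1) (c + w2) t01.
have := ler_wpM2l t0 (ltW fw1).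
have : (1 - t) * f (c + w2) <= (1 - t) * (ker_inf c + eps).
  by rewrite ler_wpM2l ?subr_ge0 // ltW.
rewrite /ker_inf; lra.
Qed.

Lemma lagrange_multiplier (b : 'cV[R]_m) (xhat : 'cV[R]_n) :
  A *m xhat = b -> (forall z, A *m z = b -> f xhat <= f z) ->
  exists2 s, (forall w, A *m w = 0 -> inner s w = 0) & in_subdiff f xhat s.
Proof.
move=> Axb opt.
have k_xhat : ker_inf xhat = f xhat.
  apply/le_anti/andP; split; first by have := ker_inf_le xhat (mulmx0 _ _); rewrite addr0.
  apply: lb_le_inf (has_inf_ker xhat).1 _ => _ [w Aw <-].
  by apply: opt; rewrite mulmxDr Aw addr0.
have [s Hs] := convex_subgradient xhat ker_inf_convex.
have s_le0 w : A *m w = 0 -> inner s w <= 0.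
  move=> Aw; have := Hs (xhat + w); rewrite addrAC subrr add0r k_xhat.
  have := ker_inf_le (xhat + w) (w := - w); rewrite mulmxN Aw oppr0 addrK.
  by move=> /(_ erefl); lra.
exists s => [w Aw | z].
  apply/le_anti; rewrite s_le0 //= -oppr_le0 -innerNr.
  by rewrite s_le0 // mulmxN Aw oppr0.
rewrite -k_xhat; apply: le_trans (Hs z) _.
by have := ker_inf_le z (mulmx0 _ _); rewrite addr0.
Qed.

Lemma Psihat_eq (b : 'cV[R]_m) (xhat : 'cV[R]_n) :
  A *m xhat = b -> (forall z, A *m z = b -> f xhat <= f z) ->
  Psihat f A b = - f xhat.
Proof.
move=> Axb opt.
have [s s_ker s_sub] := lagrange_multiplier Axb opt.
have [ys Ays] := orthogonal_ker_in_range s_ker.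
have Psi_ge y : - f xhat <= Psi f A b y.
  by have := le_fconj f_sc (A^T *m y) xhat; rewrite /Psi inner_trmx Axb innerC; lra.
have Psi_ys : Psi f A b ys = - f xhat.
  rewrite /Psi Ays (fconj_subdiff f_sc s_sub) -Ays inner_trmx Axb innerC.
  by rewrite addrAC subrr add0r.
apply/le_anti/andP; split.
  rewrite -Psi_ys; apply: ge_inf; last by exists ys.
  by exists (- f xhat) => _ [y _ <-]; exact: Psi_ge.
apply: lb_le_inf; first by exists (Psi f A b 0), 0.
by move=> _ [y _ <-]; exact: Psi_ge.
Qed.

End Duality.

Theorem lemma1 (R : realType) (m n : nat) (A : 'M[R]_(m, n)) (b : 'cV[R]_m)
  (f : 'cV[R]_n -> R) (xhat : 'cV[R]_n)
  (y : nat -> 'cV[R]_m) (d x : nat -> 'cV[R]_n) :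
  (exists x0 : 'cV[R]_n, A *m x0 = b) ->
  strongly_convex f ->
  A *m xhat = b ->
  (forall z : 'cV[R]_n, A *m z = b -> f xhat <= f z) ->
  (forall k, d k = A^T *m y k) ->
  (forall k, is_gradient (fconj f) (d k) (x k)) ->
  forall k, bregman f (d k) (x k) xhat = Psi f A b (y k) - Psihat f A b.
Proof.
move=> _ f_sc Axb opt d_def grad k.
rewrite (Psihat_eq f_sc Axb opt) /Psi -d_def (fconj_gradient f_sc (grad k)) /bregman.
rewrite -Axb [inner (A *m xhat) _]innerC -inner_trmx -d_def innerBr.
by rewrite [inner (d k) xhat]innerC; ring.
Qed.
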